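(* Let $N\ge2$, $d\ge1$, and let $\tilde\psi:\mathbb{R}\to\mathbb{R}$ be a positive, bounded, continuous function with $\tilde K:=\|\tilde\psi\|_\infty$ satisfying $$\int_0^\infty\min_{r\in[0,x]}\tilde\psi(r)\,dx=+\infty.$$ Let $\{t_n\}_{n\in\mathbb{N}_0}$ be an increasing sequence of nonnegative numbers with $t_0=0$, $t_n\to\infty$, and define $\alpha:[0,\infty)\to\{-1,1\}$ by $\alpha(0)=1$, $\alpha(t)=1$ on $(t_{2n},t_{2n+1})$, $\alpha(t)=-1$ on $[t_{2n+1},t_{2n+2}]$, $n\in\mathbb{N}_0$. Assume $$t_{2n+2}-t_{2n+1}<\frac{\ln2}{\tilde K},\qquad t_{2n+1}-t_{2n}>\frac1{\tilde K}\qquad\forall n\in\mathbb{N}_0,$$ and $$\sum_{p=0}^{\infty}\ln\left(\frac{e^{\tilde K(t_{2p+2}-t_{2p+1})}}{2-e^{\tilde K(t_{2p+2}-t_{2p+1})}}\right)<+\infty.$$ Then every solution $\{(x_i,v_i)\}_{i=1,\dots,N}$ of $$\frac{d}{dt}x_i(t)=v_i(t),\qquad \frac{d}{dt}v_i(t)=\frac{1}{N-1}\sum_{j\ne i}\alpha(t)\,\tilde\psi(|x_i(t)-x_j(t)|)\,(v_j(t)-v_i(t)),\quad t>0,$$ with $x_i(0)=x_i^0$, $v_i(0)=v_i^0\in\mathbb{R}^d$, exhibits asymptotic flocking: there is $d^*>0$ with $\sup_{t\ge0}d_X(t)\le d^*$, and $\lim_{t\to\infty}d_V(t)=0$, where $d_X(t):=\max_{i,j}|x_i(t)-x_j(t)|$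 and $d_V(t):=\max_{i,j}|v_i(t)-v_j(t)|$.
   Context: $\mathbb{N}_0=\{0,1,2,\dots\}$. A solution is a continuous function, $C^1$ on each interval $(t_n,t_{n+1})$, satisfying the system there. *)

From Stdlib Require Import Reals Lra Lia Arith ClassicalEpsilon.
From Coquelicot Require Import Coquelicot.
Open Scope R_scope.

Fixpoint rsum (n : nat) (f : nat -> R) : R :=
  match n with O => 0 | S m => rsum m f + f m end.

(* rmax n f = max (0, f 0, ..., f (n-1)); used only for nonnegative f *)
Fixpoint rmax (n : nat) (f : nat -> R) : R :=
  match n with O => 0 | S m => Rmax (rmax m f) (f m) end.

(* Euclidean distance in R^d between y and z at time t;
   a vector of R^d is given by its components k = 0..d-1 *)
Definition edist (d : nat) (y z : nat -> R -> R) (t : R) : R :=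
  sqrt (rsum d (fun k => (y k t - z k t) ^ 2)).

Definition alpha (ts : nat -> R) (t : R) : R :=
  match excluded_middle_informative
          (exists n : nat, ts (2 * n + 1)%nat <= t <= ts (2 * n + 2)%nat) with
  | left _ => -1
  | right _ => 1
  end.

(* min_{r in [0,x]} psi(r) (attained since psi is continuous) *)
Definition psi_min (psi : R -> R) (x : R) : R :=
  real (Glb_Rbar (fun y => exists r, 0 <= r <= x /\ y = psi r)).

Definition cont_nonneg (f : R -> R) : Prop :=
  forall t, 0 <= t -> forall eps, 0 < eps ->
    exists delta, 0 < delta /\
      forall s, 0 <= s -> Rabs (s - t) < delta -> Rabs (f s - f t) < eps.

(* x i k t, v i k t : k-th component of position / velocity of agent i at time t *)
Definition is_solution (N d : nat) (psi : R -> R) (ts : nat -> R)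
  (x v : nat -> nat -> R -> R) : Prop :=
  forall i k, (i < N)%nat -> (k < d)%nat ->
    cont_nonneg (x i k) /\ cont_nonneg (v i k) /\
    forall n t, ts n < t < ts (S n) ->
      is_derive (x i k) t (v i k t) /\
      is_derive (v i k) t
        (/ (INR N - 1) *
         rsum N (fun j => if Nat.eqb j i then 0 else
                   alpha ts t * psi (edist d (x i) (x j) t) *
                   (v j k t - v i k t))) /\
      continuous (Derive (x i k)) t /\
      continuous (Derive (v i k)) t.

Definition dX (N d : nat) (x : nat -> nat -> R -> R) (t : R) : R :=
  rmax N (fun i => rmax N (fun j => edist d (x i) (x j) t)).

From Stdlib Require Import Reals Lra Lia Arith ClassicalEpsilon.
From Coquelicot Require Import Coquelicot.
Open Scope R_scope.

(** Let E_x and E_v be the sums of the squared pairwise distances of the positions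
    and of the velocities, and let Psi be a primitive of r |-> min_{[0, r]} psi.
    On the cooperative phases (alpha = 1) the functional sqrt E_v + Psi (sqrt E_x)
    is nonincreasing; on a repulsive phase of length l it grows at most by the
    factor exp (12 K l), and these factors have a finite product by the series
    hypothesis.  Hence Psi (sqrt E_x) stays bounded, and since Psi is unbounded the
    diameter stays below some D.  Then every weight is at least m = min_{[0, D]} psi,
    so over each period sqrt E_v is multiplied by at most
    exp (- m / K + 2 K l), which makes it decay geometrically. *)

Lemma rsum_ext n f g : (forall m, (m < n)%nat -> f m = g m) -> rsum n f = rsum n g.
Proof.
  induction n as [|n IH]; intros H; simpl; auto.
  rewrite IH by (intros; apply H; lia). rewrite H by lia. reflexivity.
Qed.

Lemma rsum_plus n f g : rsum n (fun m => f m + g m) = rsum n f + rsum n g.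
Proof. induction n as [|n IH]; simpl; [ring | rewrite IH; ring]. Qed.

Lemma rsum_scal n c f : rsum n (fun m => c * f m) = c * rsum n f.
Proof. induction n as [|n IH]; simpl; [ring | rewrite IH; ring]. Qed.

Lemma rsum_const n c : rsum n (fun _ => c) = INR n * c.
Proof. induction n as [|n IH]; simpl rsum; [simpl; ring | rewrite IH, S_INR; ring]. Qed.

Lemma rsum_le n f g : (forall m, (m < n)%nat -> f m <= g m) -> rsum n f <= rsum n g.
Proof.
  induction n as [|n IH]; intros H; simpl; [lra |].
  apply Rplus_le_compat; [apply IH; intros |]; apply H; lia.
Qed.

Lemma rsum_nonneg n f : (forall m, (m < n)%nat -> 0 <= f m) -> 0 <= rsum n f.
Proof. intros H. rewrite <- (Rmult_0_r (INR n)), <- rsum_const. now apply rsum_le. Qed.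

Lemma rsum_term_le n f m : (forall l, (l < n)%nat -> 0 <= f l) -> (m < n)%nat -> f m <= rsum n f.
Proof.
  induction n as [|n IH]; intros H Hm; simpl; [lia |].
  assert (0 <= f n) by (apply H; lia).
  destruct (Nat.eq_dec m n) as [->|Hmn].
  - assert (0 <= rsum n f) by (apply rsum_nonneg; intros; apply H; lia). lra.
  - assert (f m <= rsum n f) by (apply IH; [intros; apply H |]; lia). lra.
Qed.

Lemma rsum_swap n m (F : nat -> nat -> R) :
  rsum n (fun i => rsum m (fun j => F i j)) = rsum m (fun j => rsum n (fun i => F i j)).
Proof.
  induction n as [|n IH]; simpl.
  - rewrite rsum_const; ring.
  - rewrite IH, <- rsum_plus; reflexivity.
Qed.

Lemma rsum2_symmetrize n (F : nat -> nat -> R) :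
  rsum n (fun i => rsum n (fun j => F i j)) =
  / 2 * rsum n (fun i => rsum n (fun j => F i j + F j i)).
Proof.
  rewrite (rsum_ext n (fun i => rsum n (fun j => F i j + F j i))
                      (fun i => rsum n (fun j => F i j) + rsum n (fun j => F j i)))
    by (intros; apply rsum_plus).
  rewrite rsum_plus, (rsum_swap n n (fun i j => F j i)). field.
Qed.

Lemma rsum2_diff_mul n (a b : nat -> R) :
  rsum n (fun i => rsum n (fun j => (a i - a j) * (b i - b j))) =
  2 * (INR n * rsum n (fun i => a i * b i) - rsum n a * rsum n b).
Proof.
  transitivity (rsum n (fun i => INR n * (a i * b i) + (- rsum n b) * a i + (- rsum n a) * b i
                                + rsum n (fun j => a j * b j))).
  - apply rsum_ext; intros i _.
    transitivity (rsum n (fun j => a i * b i + (- a i) * b j + (- b i) * a j + a j * b j));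
      [apply rsum_ext; intros; ring |].
    rewrite !rsum_plus, !rsum_scal, rsum_const. ring.
  - rewrite !rsum_plus, !rsum_scal, rsum_const. ring.
Qed.

Lemma rsum2_consensus n (u : nat -> R) (w : nat -> nat -> R) c :
  (forall i j, w i j = w j i) ->
  rsum n (fun i => rsum n (fun j => (u i - u j) *
    (c * rsum n (fun l => w i l * (u l - u i)) - c * rsum n (fun l => w j l * (u l - u j))))) =
  - INR n * c * rsum n (fun i => rsum n (fun j => w i j * (u i - u j) ^ 2)).
Proof.
  intros Hw. set (b i := c * rsum n (fun l => w i l * (u l - u i))).
  assert (Hb : rsum n b = 0).
  { unfold b. rewrite rsum_scal, rsum2_symmetrize.
    rewrite (rsum_ext n _ (fun _ => 0)); [rewrite rsum_const; ring |]. intros i _.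
    rewrite (rsum_ext n _ (fun _ => 0)); [rewrite rsum_const; ring |]. intros j _.
    rewrite (Hw j i); ring. }
  assert (Hub : rsum n (fun i => u i * b i) =
                - (c / 2) * rsum n (fun i => rsum n (fun j => w i j * (u i - u j) ^ 2))).
  { transitivity (c * rsum n (fun i => rsum n (fun l => w i l * (u i * (u l - u i))))).
    - rewrite <- rsum_scal. apply rsum_ext; intros i _. unfold b.
      rewrite <- Rmult_assoc, (Rmult_comm (u i) c), Rmult_assoc, <- rsum_scal.
      f_equal. apply rsum_ext; intros; ring.
    - rewrite rsum2_symmetrize, <- !rsum_scal. apply rsum_ext; intros i _.
      rewrite <- !rsum_scal. apply rsum_ext; intros j _. rewrite (Hw j i). field. }
  change (rsum n (fun i => rsum n (fun j => (u i - u j) * (b i - b j))) =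
          - INR n * c * rsum n (fun i => rsum n (fun j => w i j * (u i - u j) ^ 2))).
  rewrite rsum2_diff_mul, Hb, Hub. field.
Qed.

Lemma rmax_le n f B : 0 <= B -> (forall m, (m < n)%nat -> f m <= B) -> rmax n f <= B.
Proof.
  induction n as [|n IH]; intros HB H; simpl; auto.
  apply Rmax_lub; [apply IH; auto; intros |]; apply H; lia.
Qed.

Lemma rmax_nonneg n f : 0 <= rmax n f.
Proof. induction n as [|n IH]; simpl; [lra | eapply Rle_trans; [apply IH | apply Rmax_l]]. Qed.

Lemma rsum_sum_n a n : rsum (S n) a = sum_n a n.
Proof.
  induction n as [|n IH].
  - rewrite sum_O; simpl; ring.
  - rewrite sum_Sn, <- IH; reflexivity.
Qed.

Lemma rsum_le_Series a n : ex_series a -> (forall m, 0 <= a m) -> rsum n a <= Series a.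
Proof.
  intros Ha Hpos.
  assert (Hsum : forall m, sum_n a m <= Series a).
  { apply is_lim_seq_incr_compare; [apply Series_correct, Ha |].
    intros m; rewrite sum_Sn; specialize (Hpos (S m)); unfold plus; simpl; lra. }
  destruct n as [|n]; [| rewrite rsum_sum_n; apply Hsum].
  specialize (Hsum O); rewrite sum_O in Hsum; specialize (Hpos O); simpl; lra.
Qed.

Lemma le_exp_rsum_of_step (a rho : nat -> R) n :
  (forall m, 0 <= a m) -> (forall m, a (S m) <= a m * exp (rho m)) ->
  a n <= a O * exp (rsum n rho).
Proof.
  intros Hpos Hstep. induction n as [|n IH]; simpl.
  - rewrite exp_0; lra.
  - rewrite exp_plus, <- Rmult_assoc.
    eapply Rle_trans; [apply Hstep |].
    apply Rmult_le_compat_r; [left; apply exp_pos | exact IH].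
Qed.

Definition sum3 N d (F : nat -> nat -> nat -> R) : R :=
  rsum d (fun k => rsum N (fun i => rsum N (fun j => F k i j))).

Lemma sum3_le N d F G :
  (forall k i j, (k < d)%nat -> (i < N)%nat -> (j < N)%nat -> F k i j <= G k i j) ->
  sum3 N d F <= sum3 N d G.
Proof. intros H. do 3 (apply rsum_le; intros ? ?). auto. Qed.

Lemma sum3_plus N d F G : sum3 N d (fun k i j => F k i j + G k i j) = sum3 N d F + sum3 N d G.
Proof.
  unfold sum3. rewrite <- rsum_plus. apply rsum_ext; intros.
  rewrite <- rsum_plus. apply rsum_ext; intros. apply rsum_plus.
Qed.

Lemma sum3_scal N d c F : sum3 N d (fun k i j => c * F k i j) = c * sum3 N d F.
Proof.
  unfold sum3. rewrite <- rsum_scal. apply rsum_ext; intros.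
  rewrite <- rsum_scal. apply rsum_ext; intros. apply rsum_scal.
Qed.

Lemma sum3_nonneg N d F :
  (forall k i j, (k < d)%nat -> (i < N)%nat -> (j < N)%nat -> 0 <= F k i j) -> 0 <= sum3 N d F.
Proof. intros H. do 3 (apply rsum_nonneg; intros ? ?). auto. Qed.

Lemma le_of_le_add_eps A B C : 0 <= C -> (forall e, 0 < e -> A <= B + e * C) -> A <= B.
Proof.
  intros HC H. apply Rnot_lt_le; intros Hlt.
  assert (He : 0 < (A - B) / (2 * (C + 1))) by (apply Rdiv_lt_0_compat; lra).
  specialize (H _ He).
  assert ((A - B) / (2 * (C + 1)) * C < A - B); [| lra].
  apply Rmult_lt_reg_r with (2 * (C + 1)); [lra |].
  replace ((A - B) / (2 * (C + 1)) * C * (2 * (C + 1))) with ((A - B) * C) by (field; lra). nra.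
Qed.

Lemma le_sqrt_mul_of_amgm A B D : 0 <= A -> 0 <= B ->
  (forall l, 0 < l -> 2 * D <= l * A + B / l) -> D <= sqrt A * sqrt B.
Proof.
  intros HA HB H.
  set (a := sqrt A). set (b := sqrt B).
  assert (Ha : 0 <= a) by apply sqrt_pos. assert (Hb : 0 <= b) by apply sqrt_pos.
  assert (HaA : a * a = A) by now apply sqrt_sqrt. assert (HbB : b * b = B) by now apply sqrt_sqrt.
  apply (le_of_le_add_eps _ _ (a + b)); [lra |]. intros e He.
  (* the optimal l = b / a, perturbed by e to avoid dividing by zero *)
  specialize (H ((b + e) / (a + e)) ltac:(apply Rdiv_lt_0_compat; lra)).
  replace ((b + e) / (a + e) * A + B / ((b + e) / (a + e)))
    with ((b + e) * (a * a / (a + e)) + (a + e) * (b * b / (b + e))) in H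
    by (rewrite <- HaA, <- HbB; field; lra).
  assert (a * a / (a + e) <= a)
    by (apply Rmult_le_reg_r with (a + e); [lra | field_simplify; nra]).
  assert (b * b / (b + e) <= b)
    by (apply Rmult_le_reg_r with (b + e); [lra | field_simplify; nra]).
  nra.
Qed.

Lemma sum3_cauchy_schwarz N d a b :
  sum3 N d (fun k i j => a k i j * b k i j) <=
  sqrt (sum3 N d (fun k i j => a k i j ^ 2)) * sqrt (sum3 N d (fun k i j => b k i j ^ 2)).
Proof.
  apply le_sqrt_mul_of_amgm; try (apply sum3_nonneg; intros; apply pow2_ge_0).
  intros l Hl. unfold Rdiv. rewrite (Rmult_comm _ (/ l)), <- !sum3_scal, <- sum3_plus.
  apply sum3_le; intros k i j _ _ _.
  assert (0 <= (l * a k i j - b k i j) ^ 2 / l)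
    by (apply Rdiv_le_0_compat; [apply pow2_ge_0 | exact Hl]).
  replace ((l * a k i j - b k i j) ^ 2 / l)
    with (l * a k i j ^ 2 + / l * b k i j ^ 2 - 2 * (a k i j * b k i j)) in H by (field; lra).
  lra.
Qed.

Lemma sqrt_add_sq_le E e : 0 <= E -> 0 <= e -> sqrt (E + e * e) <= sqrt E + e.
Proof.
  intros HE He. apply Rsqr_incr_0_var; [| generalize (sqrt_pos E); lra].
  rewrite Rsqr_sqrt by nra. unfold Rsqr.
  assert (sqrt E * sqrt E = E) by now apply sqrt_sqrt.
  generalize (sqrt_pos E); nra.
Qed.

Lemma div_sqrt_add_sq_le A V C e : 0 <= A -> 0 <= V -> 0 < e -> C <= sqrt A * V ->
  2 * C / (2 * sqrt (A + e * e)) <= V.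
Proof.
  intros HA HV He HC.
  assert (Hs : sqrt A <= sqrt (A + e * e)) by (apply sqrt_le_1_alt; nra).
  assert (Hpos : 0 < sqrt (A + e * e)) by (apply sqrt_lt_R0; nra).
  apply Rmult_le_reg_r with (2 * sqrt (A + e * e)); [lra |].
  field_simplify; [| lra]. nra.
Qed.

Lemma dissipative_rate_le E Ve dE g X' e :
  0 <= E -> 0 <= g -> 0 < Ve -> sqrt E <= Ve <= sqrt E + e ->
  dE <= -2 * g * E -> X' <= sqrt E -> dE / (2 * Ve) + X' * g <= g * e.
Proof.
  intros HE Hg HVe [HVl HVu] HdE HX.
  set (V := sqrt E) in *. assert (HV : V * V = E) by now apply sqrt_sqrt.
  assert (HV0 : 0 <= V) by apply sqrt_pos.
  (* E / Ve >= V - e: the velocity term absorbs the position term up to g * e *)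
  assert (Hq : (V - e) * Ve <= E) by nra.
  assert (dE / (2 * Ve) <= - g * (V - e)); [| nra].
  apply Rmult_le_reg_r with (2 * Ve); [lra |]. field_simplify; [| lra]. nra.
Qed.

Lemma exp_le_mono x y : x <= y -> exp x <= exp y.
Proof. intros [H | ->]; [left; now apply exp_increasing | lra]. Qed.

Lemma exp_le_affine y : 0 <= y -> exp y <= 1 + y * exp y.
Proof.
  intros Hy. generalize (exp_ineq1_le (- y)) (exp_pos y).
  assert (exp y * exp (- y) = 1) by (rewrite <- exp_plus, Rplus_opp_r; apply exp_0).
  nra.
Qed.

Lemma sqrt_le_mul_exp E E0 y : 0 <= E0 -> E <= E0 * exp (2 * y) -> sqrt E <= sqrt E0 * exp y.
Proof.
  intros HE0 HE. eapply Rle_trans; [apply sqrt_le_1_alt, HE |].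
  replace (exp (2 * y)) with (exp y * exp y) by (rewrite <- exp_plus; f_equal; ring).
  rewrite sqrt_mult_alt, sqrt_square; [lra | left; apply exp_pos | exact HE0].
Qed.

Lemma exp_mult_INR y n : exp (INR n * y) = exp y ^ n.
Proof.
  induction n as [| n IH]; [simpl; rewrite Rmult_0_l; apply exp_0 |].
  rewrite S_INR, Rmult_plus_distr_r, Rmult_1_l, exp_plus, IH. simpl; ring.
Qed.

Lemma le_ln_exp_ratio s : 0 <= s -> exp s < 2 -> s <= ln (exp s / (2 - exp s)).
Proof.
  intros Hs H2. rewrite <- (ln_exp s) at 1. apply ln_le; [apply exp_pos |].
  assert (1 <= exp s) by (rewrite <- exp_0; now apply exp_le_mono).
  apply Rmult_le_reg_r with (2 - exp s); [lra |]. field_simplify; nra.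
Qed.

Lemma cont_nonneg_filterlim f :
  cont_nonneg f <->
  forall t, 0 <= t -> filterlim f (within (fun s => 0 <= s) (locally t)) (locally (f t)).
Proof.
  split.
  - intros Hf t Ht P [eps HP].
    destruct (Hf t Ht eps (cond_pos eps)) as [delta [Hdelta Hclose]].
    exists (mkposreal delta Hdelta); intros s Hs Hs0. now apply HP, Hclose.
  - intros Hf t Ht eps Heps.
    destruct (Hf t Ht _ (locally_ball (f t) (mkposreal eps Heps))) as [delta Hdelta].
    exists delta; split; [apply cond_pos |]. intros s Hs0 Hs. now apply Hdelta.
Qed.

Lemma cont_nonneg_of_continuous f : (forall t, continuous f t) -> cont_nonneg f.
Proof.
  intros Hf. apply cont_nonneg_filterlim. intros t _.
  eapply filterlim_filter_le_1; [apply filter_le_within | apply Hf].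
Qed.

Lemma cont_nonneg_of_ex_derive f : (forall t, ex_derive f t) -> cont_nonneg f.
Proof.
  intros Hf. apply cont_nonneg_of_continuous. intros t.
  apply (ex_derive_continuous (V := R_NormedModule)), Hf.
Qed.

Lemma cont_nonneg_comp h f : (forall y, continuous h y) -> cont_nonneg f ->
  cont_nonneg (fun t => h (f t)).
Proof.
  rewrite !cont_nonneg_filterlim. intros Hh Hf t Ht.
  eapply filterlim_comp; [apply Hf, Ht | apply Hh].
Qed.

Lemma cont_nonneg_plus f g : cont_nonneg f -> cont_nonneg g -> cont_nonneg (fun t => f t + g t).
Proof.
  rewrite !cont_nonneg_filterlim. intros Hf Hg t Ht.
  eapply filterlim_comp_2; [apply Hf, Ht | apply Hg, Ht | apply (@filterlim_plus _ R_NormedModule)].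
Qed.

Lemma cont_nonneg_mult f g : cont_nonneg f -> cont_nonneg g -> cont_nonneg (fun t => f t * g t).
Proof.
  rewrite !cont_nonneg_filterlim. intros Hf Hg t Ht.
  eapply filterlim_comp_2; [apply Hf, Ht | apply Hg, Ht | apply (@filterlim_mult R_AbsRing)].
Qed.

Lemma cont_nonneg_minus f g : cont_nonneg f -> cont_nonneg g -> cont_nonneg (fun t => f t - g t).
Proof.
  intros Hf Hg. apply (cont_nonneg_plus f (fun t => - g t)); [exact Hf |].
  apply (cont_nonneg_comp Ropp); [| exact Hg].
  intros y; apply (ex_derive_continuous (V := R_NormedModule)); auto_derive; exact I.
Qed.

Lemma cont_nonneg_rsum n (f : nat -> R -> R) :
  (forall m, (m < n)%nat -> cont_nonneg (f m)) -> cont_nonneg (fun t => rsum n (fun m => f m t)).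
Proof.
  induction n as [|n IH]; intros H; simpl.
  - apply cont_nonneg_of_continuous; intros; apply continuous_const.
  - apply cont_nonneg_plus; [apply IH; intros |]; apply H; lia.
Qed.

Lemma cont_nonneg_continuous f t : cont_nonneg f -> 0 < t -> continuous f t.
Proof.
  intros Hf Ht P [eps HP].
  destruct (Hf t (Rlt_le _ _ Ht) eps (cond_pos eps)) as [delta [Hdelta Hclose]].
  assert (Hmin : 0 < Rmin delta t) by (apply Rmin_pos; lra).
  exists (mkposreal _ Hmin); intros s Hs. apply HP, Hclose.
  - assert (Hst : Rabs (s - t) < t) by (eapply Rlt_le_trans; [apply Hs | apply Rmin_r]).
    apply Rabs_def2 in Hst; lra.
  - eapply Rlt_le_trans; [apply Hs | apply Rmin_l].
Qed.

Lemma is_derive_rsum n (f : nat -> R -> R) f' t :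
  (forall m, (m < n)%nat -> is_derive (f m) t (f' m)) ->
  is_derive (fun s => rsum n (fun m => f m s)) t (rsum n f').
Proof.
  induction n as [|n IH]; intros H; simpl.
  - apply (is_derive_const 0).
  - apply (is_derive_plus (fun s => rsum n (fun m => f m s)) (f n));
      [apply IH; intros |]; apply H; lia.
Qed.

Lemma antitone_of_derive_nonpos g g' a b t :
  0 <= a -> a <= t <= b -> cont_nonneg g ->
  (forall s, a < s < b -> is_derive g s (g' s)) -> (forall s, a < s < b -> g' s <= 0) ->
  g t <= g a.
Proof.
  intros Ha Ht Hg Hd Hneg.
  assert (Hinner : forall a' t', a < a' -> a' < t' -> t' < b -> g t' <= g a').
  { intros a' t' H1 H2 H3. destruct (MVT_gen g a' t' g') as [c [Hc Heq]];
      [intros s Hs | intros s Hs |]; rewrite Rmin_left, Rmax_right in * by lra.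
    - apply Hd; lra.
    - apply continuity_pt_filterlim, cont_nonneg_continuous; [exact Hg | lra].
    - assert (g' c <= 0) by (apply Hneg; lra). nra. }
  destruct Ht as [[Hat | <-] Htb]; [| lra].
  apply Rnot_lt_le; intros Hlt.
  set (eta := (g t - g a) / 2).
  destruct (Hg a Ha eta) as [da [Hda Hclose_a]]; [unfold eta; lra |].
  destruct (Hg t ltac:(lra) eta) as [dt [Hdt Hclose_t]]; [unfold eta; lra |].
  set (h := Rmin (Rmin da dt) ((t - a) / 3)).
  assert (Hh : 0 < h) by (repeat apply Rmin_pos; lra).
  assert (Hhda : h <= da) by (eapply Rle_trans; [apply Rmin_l | apply Rmin_l]).
  assert (Hhdt : h <= dt) by (eapply Rle_trans; [apply Rmin_l | apply Rmin_r]).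
  assert (Hhta : h <= (t - a) / 3) by apply Rmin_r.
  assert (Hga : Rabs (g (a + h / 2) - g a) < eta)
    by (apply Hclose_a; [lra | rewrite Rabs_right; lra]).
  assert (Hgt : Rabs (g (t - h / 2) - g t) < eta)
    by (apply Hclose_t; [lra | rewrite Rabs_left; lra]).
  assert (g (t - h / 2) <= g (a + h / 2)) by (apply Hinner; lra).
  apply Rabs_def2 in Hga; apply Rabs_def2 in Hgt. unfold eta in *. lra.
Qed.

Lemma gronwall g g' C a b t :
  0 <= a -> a <= t <= b -> cont_nonneg g ->
  (forall s, a < s < b -> is_derive g s (g' s)) -> (forall s, a < s < b -> g' s <= C * g s) ->
  g t <= g a * exp (C * (t - a)).
Proof.
  intros Ha Ht Hg Hd Hle.
  assert (Hmono : g t * exp (- C * t) <= g a * exp (- C * a)).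
  { apply (antitone_of_derive_nonpos (fun s => g s * exp (- C * s))
             (fun s => (g' s - C * g s) * exp (- C * s)) a b); [exact Ha | exact Ht | | |].
    - apply cont_nonneg_mult; [exact Hg |].
      apply cont_nonneg_of_ex_derive; intros s; auto_derive; exact I.
    - intros s Hs. replace ((g' s - C * g s) * exp (- C * s))
        with (g' s * exp (- C * s) + g s * (- C * exp (- C * s))) by ring.
      apply (is_derive_mult g (fun s => exp (- C * s))); [now apply Hd | | apply Rmult_comm].
      auto_derive; [exact I | ring].
    - intros s Hs. specialize (Hle s Hs). assert (0 < exp (- C * s)) by apply exp_pos. nra. }
  replace (g t) with (g t * exp (- C * t) * exp (C * t))
    by (rewrite Rmult_assoc, <- exp_plus; replace (- C * t + C * t) with 0 by ring;
        rewrite exp_0; ring).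
  replace (exp (C * (t - a))) with (exp (- C * a) * exp (C * t))
    by (rewrite <- exp_plus; f_equal; ring).
  rewrite <- Rmult_assoc. apply Rmult_le_compat_r; [left; apply exp_pos | exact Hmono].
Qed.

Lemma is_lim_0_of_geometric_tail (h : R -> R) (T : nat -> R) C q :
  0 <= q < 1 -> (forall t, 0 <= h t) -> (forall n t, T n < t -> h t <= C * q ^ n) ->
  is_lim h p_infty 0.
Proof.
  intros Hq Hh Htail. apply is_lim_spec. intros eps.
  assert (Hgeom := is_lim_seq_geom q ltac:(rewrite Rabs_right; lra)).
  apply is_lim_seq_spec in Hgeom.
  assert (HC : 0 <= Rabs C) by apply Rabs_pos.
  assert (Hpos : 0 < eps / (Rabs C + 1)) by (apply Rdiv_lt_0_compat; [apply cond_pos | lra]).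
  destruct (Hgeom (mkposreal _ Hpos)) as [n Hn]. simpl in Hn.
  exists (T n). intros t Ht. specialize (Hn n (Nat.le_refl n)).
  rewrite Rminus_0_r, Rabs_right in Hn by (apply Rle_ge, pow_le; lra).
  rewrite Rminus_0_r, Rabs_right by (apply Rle_ge, Hh).
  eapply Rle_lt_trans; [apply (Htail n t Ht) |].
  assert (Hqn : 0 <= q ^ n) by (apply pow_le; lra).
  apply Rle_lt_trans with (Rabs C * q ^ n);
    [apply Rmult_le_compat_r; [exact Hqn | apply Rle_abs] |].
  apply Rmult_lt_compat_r with (r := Rabs C + 1) in Hn; [| lra].
  unfold Rdiv in Hn. rewrite Rmult_assoc, Rinv_l, Rmult_1_r in Hn by lra.
  nra.
Qed.

(** * The lower envelope of psi and its primitive *)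

Section PsiMin.

Variables (psi : R -> R) (K : R).
Hypothesis psi_cont : forall r, continuous psi r.
Hypothesis psi_pos : forall r, 0 < psi r.
Hypothesis psi_le : forall r, psi r <= K.

Lemma psi_min_attained x : 0 <= x ->
  exists r, 0 <= r <= x /\ psi_min psi x = psi r /\ forall r', 0 <= r' <= x -> psi r <= psi r'.
Proof.
  intros Hx.
  destruct (continuity_ab_min psi 0 x Hx) as [r [Hmin Hr]].
  { intros c _. apply continuity_pt_filterlim, psi_cont. }
  exists r; repeat split; try apply Hr; try exact Hmin.
  unfold psi_min. rewrite (is_glb_Rbar_unique _ (Finite (psi r))); [reflexivity |]. split.
  - intros y [r' [Hr' ->]]. apply Hmin, Hr'.
  - intros y Hy. apply Hy. now exists r.
Qed.

Lemma psi_min_le x r : 0 <= r <= x -> psi_min psi x <= psi r.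
Proof.
  intros Hr. destruct (psi_min_attained x) as [r0 [_ [-> Hmin]]]; [lra |]. now apply Hmin.
Qed.

Lemma psi_min_pos x : 0 <= x -> 0 < psi_min psi x.
Proof. intros Hx. destruct (psi_min_attained x Hx) as [r [_ [-> _]]]. apply psi_pos. Qed.

Lemma psi_min_le_K x : 0 <= x -> psi_min psi x <= K.
Proof. intros Hx. destruct (psi_min_attained x Hx) as [r [_ [-> _]]]. apply psi_le. Qed.

Lemma psi_min_continuous y0 : 0 <= y0 -> forall eps, 0 < eps -> exists delta, 0 < delta /\
  forall y, 0 <= y -> Rabs (y - y0) < delta -> Rabs (psi_min psi y - psi_min psi y0) < eps.
Proof.
  intros Hy0 eps Heps.
  destruct (psi_min_attained y0 Hy0) as [r0 [Hr0 [E0 Hmin0]]].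
  assert (Hcont : forall c, exists delta, 0 < delta /\
            forall z, Rabs (z - c) < delta -> Rabs (psi z - psi c) < eps).
  { intros c. destruct (psi_cont c _ (locally_ball (psi c) (mkposreal eps Heps))) as [d Hd].
    exists d; split; [apply cond_pos | intros z Hz; apply (Hd z Hz)]. }
  destruct (Hcont y0) as [d1 [Hd1 Hc1]]. destruct (Hcont r0) as [d2 [Hd2 Hc2]].
  exists (Rmin d1 d2); split; [now apply Rmin_pos |]. intros y Hy Hyd.
  assert (Hy1 : Rabs (y - y0) < d1) by (eapply Rlt_le_trans; [apply Hyd | apply Rmin_l]).
  assert (Hy2 : Rabs (y - y0) < d2) by (eapply Rlt_le_trans; [apply Hyd | apply Rmin_r]).
  destruct (psi_min_attained y Hy) as [r [Hr [E Hmin]]].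
  rewrite E, E0. apply Rabs_def1.
  - (* psi_min y can exceed psi_min y0 only if y < r0, and then psi y is close to psi r0 *)
    destruct (Rle_or_lt r0 y) as [Hr0y | Hyr0].
    + assert (psi r <= psi r0) by (apply Hmin; lra). lra.
    + assert (psi r <= psi y) by (apply Hmin; lra).
      assert (Hclose : Rabs (psi y - psi r0) < eps)
        by (apply Hc2; eapply Rle_lt_trans; [| apply Hy2]; rewrite !Rabs_left1; lra).
      apply Rabs_def2 in Hclose. lra.
  - (* psi_min y can fall below psi_min y0 only at some r in (y0, y], close to y0 *)
    destruct (Rle_or_lt r y0) as [Hry0 | Hy0r].
    + assert (psi r0 <= psi r) by (apply Hmin0; lra). lra.
    + assert (psi r0 <= psi y0) by (apply Hmin0; lra).
      assert (Hclose : Rabs (psi r - psi y0) < eps)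
        by (apply Hc1; eapply Rle_lt_trans; [| apply Hy1]; rewrite !Rabs_right; lra).
      apply Rabs_def2 in Hclose. lra.
Qed.

(* [psi_min psi y] is a junk value for y < 0; going through [Rabs] gives an integrand
   that is continuous on all of R, so that the fundamental theorem of calculus applies. *)
Definition psi_min_abs (y : R) : R := psi_min psi (Rabs y).

Definition Psi (y : R) : R := RInt psi_min_abs 0 y.

Lemma psi_min_abs_continuous y : continuous psi_min_abs y.
Proof.
  apply continuity_pt_filterlim. intros eps Heps.
  destruct (psi_min_continuous (Rabs y) (Rabs_pos y) eps Heps) as [delta [Hdelta Hclose]].
  exists delta; split; [exact Hdelta |]. intros z [_ Hz].
  apply Hclose; [apply Rabs_pos |]. eapply Rle_lt_trans; [apply Rabs_triang_inv2 | exact Hz].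
Qed.

Lemma Psi_derive y : is_derive Psi y (psi_min_abs y).
Proof.
  apply (is_derive_RInt psi_min_abs Psi 0); [| apply psi_min_abs_continuous].
  apply filter_forall. intros z. apply (RInt_correct (V := R_CompleteNormedModule)).
  apply (ex_RInt_continuous (V := R_CompleteNormedModule)). intros; apply psi_min_abs_continuous.
Qed.

Lemma Psi_increment a b : a <= b -> 0 <= Psi b - Psi a <= K * (b - a).
Proof.
  intros Hab. destruct (Req_dec a b) as [<- | Hne]; [lra |].
  destruct (MVT_gen Psi a b psi_min_abs) as [c [_ ->]].
  - intros; apply Psi_derive.
  - intros; apply continuity_pt_filterlim, (ex_derive_continuous (V := R_NormedModule)).
    eexists; apply Psi_derive.
  - assert (0 < psi_min_abs c <= K)
      by (split; [apply psi_min_pos | apply psi_min_le_K]; apply Rabs_pos).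
    split; nra.
Qed.

Lemma Psi_nonneg y : 0 <= y -> 0 <= Psi y.
Proof.
  intros Hy. assert (H := Psi_increment 0 y Hy).
  replace (Psi 0) with 0 in H by (symmetry; apply (RInt_point (V := R_CompleteNormedModule))).
  lra.
Qed.

Lemma Psi_le_mono a b : a <= b -> Psi a <= Psi b.
Proof. intros Hab. generalize (Psi_increment a b Hab); lra. Qed.

Lemma Psi_continuous y : continuous Psi y.
Proof. apply (ex_derive_continuous (V := R_NormedModule)). eexists. apply Psi_derive. Qed.

Lemma RInt_psi_min y : 0 <= y -> RInt (psi_min psi) 0 y = Psi y.
Proof.
  intros Hy. apply RInt_ext. intros z Hz. rewrite Rmin_left in Hz by lra.
  unfold psi_min_abs. now rewrite Rabs_right by lra.
Qed.

End PsiMin.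

Lemma S_double p : S (2 * p) = (2 * p + 1)%nat.
Proof. lia. Qed.

Lemma S_double_succ p : S (2 * p + 1) = (2 * p + 2)%nat.
Proof. lia. Qed.

Section Switching.

Variable ts : nat -> R.
Hypothesis ts_incr : forall n, ts n < ts (S n).

Lemma ts_lt m n : (m < n)%nat -> ts m < ts n.
Proof. induction 1 as [| n _ IH]; [apply ts_incr | specialize (ts_incr n); lra]. Qed.

Lemma ts_le m n : (m <= n)%nat -> ts m <= ts n.
Proof. intros H. destruct (Nat.eq_dec m n) as [-> | Hne]; [lra | left; apply ts_lt; lia]. Qed.

Lemma alpha_pos_phase p t : ts (2 * p) < t < ts (2 * p + 1) -> alpha ts t = 1.
Proof.
  intros Ht. unfold alpha.
  destruct excluded_middle_informative as [[m Hm] |]; [exfalso | reflexivity].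
  destruct (le_lt_dec p m).
  - assert (ts (2 * p + 1) <= ts (2 * m + 1)) by (apply ts_le; lia). lra.
  - assert (ts (2 * m + 2) <= ts (2 * p)) by (apply ts_le; lia). lra.
Qed.

Lemma ts_period_cover t : is_lim_seq ts p_infty -> ts O <= t ->
  exists p, ts (2 * p) <= t <= ts (2 * p + 2).
Proof.
  intros Hlim Ht. apply is_lim_seq_spec in Hlim. destruct (Hlim t) as [M HM].
  assert (Hn : exists n, ts n <= t <= ts (S n)).
  { assert (HtM : t < ts M) by (apply HM; lia). clear HM.
    induction M as [| M IH]; [lra |].
    destruct (Rlt_or_le t (ts M)) as [Hlt | Hge]; [now apply IH | now exists M; lra]. }
  destruct Hn as [n Hn]. destruct (Nat.Even_or_Odd n) as [[p ->] | [p ->]]; exists p.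
  - assert (ts (S (2 * p)) <= ts (2 * p + 2)) by (apply ts_le; lia). lra.
  - assert (ts (2 * p) <= ts (2 * p + 1)) by (apply ts_le; lia).
    replace (S (2 * p + 1)) with (2 * p + 2)%nat in Hn by lia. lra.
Qed.

End Switching.

Definition neg_length (ts : nat -> R) (p : nat) : R := ts (2 * p + 2)%nat - ts (2 * p + 1)%nat.

(** * Pairwise energies *)

Definition energy N d (y : nat -> nat -> R -> R) (t : R) : R :=
  sum3 N d (fun k i j => (y i k t - y j k t) ^ 2).

Lemma energy_nonneg N d y t : 0 <= energy N d y t.
Proof. apply sum3_nonneg; intros; apply pow2_ge_0. Qed.

Lemma edist_le_sqrt_energy N d y t i j : (i < N)%nat -> (j < N)%nat ->
  edist d (y i) (y j) t <= sqrt (energy N d y t).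
Proof.
  intros Hi Hj. apply sqrt_le_1_alt, rsum_le; intros k Hk.
  eapply Rle_trans; [| apply (rsum_term_le N _ i); [| exact Hi]];
    [| intros; apply rsum_nonneg; intros; apply pow2_ge_0].
  apply (rsum_term_le N (fun j' => (y i k t - y j' k t) ^ 2) j);
    [intros; apply pow2_ge_0 | exact Hj].
Qed.

Lemma dX_le_sqrt_energy N d y t : dX N d y t <= sqrt (energy N d y t).
Proof.
  apply rmax_le; [apply sqrt_pos | intros i Hi].
  apply rmax_le; [apply sqrt_pos | intros j Hj]. now apply edist_le_sqrt_energy.
Qed.

Lemma edist_sym d y z t : edist d y z t = edist d z y t.
Proof. unfold edist. f_equal. apply rsum_ext; intros; ring. Qed.

Lemma cont_nonneg_energy N d y :
  (forall i k, (i < N)%nat -> (k < d)%nat -> cont_nonneg (y i k)) -> cont_nonneg (energy N d y).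
Proof.
  intros H. do 3 (apply cont_nonneg_rsum; intros ? ?).
  apply (cont_nonneg_comp (fun z => z ^ 2)); [| apply cont_nonneg_minus; auto].
  intros z; apply (ex_derive_continuous (V := R_NormedModule)); auto_derive; exact I.
Qed.

Lemma is_derive_energy N d y y' t :
  (forall i k, (i < N)%nat -> (k < d)%nat -> is_derive (y i k) t (y' i k)) ->
  is_derive (energy N d y) t
    (2 * sum3 N d (fun k i j => (y i k t - y j k t) * (y' i k - y' j k))).
Proof.
  intros H. rewrite <- sum3_scal.
  apply is_derive_rsum; intros k Hk; apply is_derive_rsum; intros i Hi;
    apply is_derive_rsum; intros j Hj.
  replace (2 * ((y i k t - y j k t) * (y' i k - y' j k)))
    with (INR 2 * (y' i k - y' j k) * (y i k t - y j k t) ^ Nat.pred 2) by (simpl; ring).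
  apply (is_derive_pow (fun s => y i k s - y j k s)).
  apply (is_derive_minus (y i k) (y j k)); auto.
Qed.

Definition dissipation N d psi (x v : nat -> nat -> R -> R) (t : R) : R :=
  sum3 N d (fun k i j => psi (edist d (x i) (x j) t) * (v i k t - v j k t) ^ 2).

Definition cross N d (x v : nat -> nat -> R -> R) (t : R) : R :=
  sum3 N d (fun k i j => (x i k t - x j k t) * (v i k t - v j k t)).

Lemma cross_le N d x v t : cross N d x v t <= sqrt (energy N d x t) * sqrt (energy N d v t).
Proof. apply sum3_cauchy_schwarz. Qed.

(** * Flocking estimates *)

Section Flocking.

Variables (N d : nat) (psi : R -> R) (K : R) (ts : nat -> R) (x v : nat -> nat -> R -> R).
Hypothesis N_ge2 : (2 <= N)%nat.
Hypothesis psi_pos : forall r, 0 < psi r.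
Hypothesis psi_cont : forall r, continuous psi r.
Hypothesis psi_le : forall r, psi r <= K.
Hypothesis ts_0 : ts O = 0.
Hypothesis ts_incr : forall n, ts n < ts (S n).
Hypothesis sol : is_solution N d psi ts x v.
Hypothesis ts_lim : is_lim_seq ts p_infty.
Hypothesis neg_phase_short : forall p, neg_length ts p < ln 2 / K.
Hypothesis neg_phase_series :
  ex_series (fun p => ln (exp (K * neg_length ts p) / (2 - exp (K * neg_length ts p)))).
Hypothesis psi_min_not_integrable : is_lim (fun X => RInt (psi_min psi) 0 X) p_infty p_infty.

Lemma K_pos : 0 < K.
Proof. generalize (psi_pos 0) (psi_le 0); lra. Qed.

Lemma K_neg_length_lt p : K * neg_length ts p < ln 2.
Proof.
  generalize (neg_phase_short p) K_pos; intros Hshort HK.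
  apply (Rmult_lt_compat_l K) in Hshort; [| exact HK]. field_simplify in Hshort; lra.
Qed.

Lemma ts_nonneg n : 0 <= ts n.
Proof. rewrite <- ts_0. apply ts_le; [exact ts_incr | lia]. Qed.

Lemma N_minus_1_pos : 0 < INR N - 1.
Proof. apply le_INR in N_ge2. simpl in N_ge2. lra. Qed.

Lemma coupling_ratio : 1 <= INR N / (INR N - 1) <= 2.
Proof.
  apply le_INR in N_ge2. simpl in N_ge2.
  split; apply Rmult_le_reg_r with (INR N - 1); try lra; field_simplify; lra.
Qed.

Lemma cont_nonneg_position_energy : cont_nonneg (energy N d x).
Proof. apply cont_nonneg_energy. intros i k Hi Hk. apply (sol i k Hi Hk). Qed.

Lemma cont_nonneg_velocity_energy : cont_nonneg (energy N d v).
Proof. apply cont_nonneg_energy. intros i k Hi Hk. apply (sol i k Hi Hk). Qed.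

Lemma position_energy_derive n t : ts n < t < ts (S n) ->
  is_derive (energy N d x) t (2 * cross N d x v t).
Proof.
  intros Ht. apply is_derive_energy. intros i k Hi Hk.
  apply (proj2 (proj2 (sol i k Hi Hk)) n t Ht).
Qed.

Lemma velocity_energy_derive n t : ts n < t < ts (S n) ->
  is_derive (energy N d v) t
    (-2 * (INR N / (INR N - 1)) * alpha ts t * dissipation N d psi x v t).
Proof.
  intros Ht. set (c := / (INR N - 1) * alpha ts t).
  set (w i l := psi (edist d (x i) (x l) t)).
  set (v' i k := c * rsum N (fun l => w i l * (v l k t - v i k t))).
  assert (Hv' : forall i k, (i < N)%nat -> (k < d)%nat -> is_derive (v i k) t (v' i k)).
  { intros i k Hi Hk. destruct (proj2 (proj2 (sol i k Hi Hk)) n t Ht) as [_ [Hd _]].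
    unfold v', c. rewrite Rmult_assoc, <- rsum_scal. erewrite rsum_ext; [exact Hd |].
    intros l _. cbv beta. destruct (Nat.eqb_spec l i) as [-> |]; unfold w; ring. }
  replace (-2 * (INR N / (INR N - 1)) * alpha ts t * dissipation N d psi x v t)
    with (2 * sum3 N d (fun k i j => (v i k t - v j k t) * (v' i k - v' j k))).
  { now apply is_derive_energy. }
  unfold dissipation, sum3. rewrite <- !rsum_scal. apply rsum_ext; intros k _.
  unfold v'. rewrite (rsum2_consensus N (fun i => v i k t) w c)
    by (intros; unfold w; now rewrite edist_sym).
  unfold c, w. field. apply Rgt_not_eq, N_minus_1_pos.
Qed.

Lemma dissipation_nonneg t : 0 <= dissipation N d psi x v t.
Proof. apply sum3_nonneg; intros. apply Rmult_le_pos; [left; apply psi_pos | apply pow2_ge_0]. Qed.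

Lemma dissipation_le t : dissipation N d psi x v t <= K * energy N d v t.
Proof.
  unfold energy. rewrite <- sum3_scal. apply sum3_le; intros.
  apply Rmult_le_compat_r; [apply pow2_ge_0 | apply psi_le].
Qed.

Lemma dissipation_ge m t :
  (forall i j, (i < N)%nat -> (j < N)%nat -> m <= psi (edist d (x i) (x j) t)) ->
  m * energy N d v t <= dissipation N d psi x v t.
Proof.
  intros Hm. unfold energy. rewrite <- sum3_scal. apply sum3_le; intros.
  apply Rmult_le_compat_r; [apply pow2_ge_0 | auto].
Qed.

Lemma velocity_energy_gronwall n C t :
  (forall s, ts n < s < ts (S n) ->
     -2 * (INR N / (INR N - 1)) * alpha ts s * dissipation N d psi x v s <= C * energy N d v s) ->
  ts n <= t <= ts (S n) -> energy N d v t <= energy N d v (ts n) * exp (C * (t - ts n)).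
Proof.
  intros HC Ht.
  apply (gronwall _ (fun s => -2 * (INR N / (INR N - 1)) * alpha ts s * dissipation N d psi x v s)
           C _ (ts (S n))); auto using ts_nonneg, cont_nonneg_velocity_energy.
  intros; eapply velocity_energy_derive; eauto.
Qed.

Lemma velocity_spread_growth n t : ts n <= t <= ts (S n) ->
  sqrt (energy N d v t) <= sqrt (energy N d v (ts n)) * exp (2 * K * (t - ts n)).
Proof.
  intros Ht. apply sqrt_le_mul_exp; [apply energy_nonneg |].
  replace (2 * (2 * K * (t - ts n))) with (4 * K * (t - ts n)) by ring.
  apply velocity_energy_gronwall; [| exact Ht]. intros s _.
  assert (Halpha : - alpha ts s <= 1)
    by (unfold alpha; destruct excluded_middle_informative; lra).
  generalize (dissipation_nonneg s) (dissipation_le s) coupling_ratio.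
  set (r := INR N / (INR N - 1)). set (D := dissipation N d psi x v s). intros HD0 HDK Hr.
  assert (HrD : 0 <= r * D <= 2 * (K * energy N d v s)) by (split; nra).
  replace (-2 * r * alpha ts s * D) with (2 * (- alpha ts s) * (r * D)) by ring. nra.
Qed.

Lemma velocity_spread_pos_phase p m t :
  (forall s, ts (2 * p) < s < ts (2 * p + 1) ->
     forall i j, (i < N)%nat -> (j < N)%nat -> m <= psi (edist d (x i) (x j) s)) ->
  ts (2 * p) <= t <= ts (2 * p + 1) ->
  sqrt (energy N d v t) <= sqrt (energy N d v (ts (2 * p))) * exp (- m * (t - ts (2 * p))).
Proof.
  intros Hm Ht. apply sqrt_le_mul_exp; [apply energy_nonneg |].
  replace (2 * (- m * (t - ts (2 * p)))) with (-2 * m * (t - ts (2 * p))) by ring.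
  rewrite <- S_double in Ht. apply velocity_energy_gronwall; [| exact Ht].
  intros s Hs. rewrite S_double in Hs. rewrite (alpha_pos_phase ts ts_incr p s Hs).
  generalize (dissipation_ge m s (Hm s Hs)) (dissipation_nonneg s) coupling_ratio; intros.
  nra.
Qed.

(* sqrt is not differentiable at 0, so the spreads are differentiated in the regularized
   form sqrt (E + e^2) and e is sent to 0 at the end (le_of_le_add_eps). *)
Definition reg_sqrt_energy (y : nat -> nat -> R -> R) (e t : R) : R :=
  sqrt (energy N d y t + e * e).

Lemma reg_sqrt_energy_bounds y e t : 0 <= e ->
  sqrt (energy N d y t) <= reg_sqrt_energy y e t <= sqrt (energy N d y t) + e.
Proof.
  intros He. split; [apply sqrt_le_1_alt; nra |].
  apply sqrt_add_sq_le; [apply energy_nonneg | exact He].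
Qed.

Lemma reg_sqrt_energy_pos y e t : 0 < e -> 0 < reg_sqrt_energy y e t.
Proof. intros He. apply sqrt_lt_R0. generalize (energy_nonneg N d y t); nra. Qed.

Lemma cont_nonneg_reg_sqrt_energy y e : cont_nonneg (energy N d y) ->
  cont_nonneg (reg_sqrt_energy y e).
Proof.
  intros Hy. apply (cont_nonneg_comp sqrt); [apply continuous_sqrt |].
  apply cont_nonneg_plus; [exact Hy | apply cont_nonneg_of_ex_derive; intros; auto_derive; exact I].
Qed.

Lemma reg_position_derive n e s : 0 < e -> ts n < s < ts (S n) ->
  is_derive (reg_sqrt_energy x e) s (2 * cross N d x v s / (2 * reg_sqrt_energy x e s)).
Proof.
  intros He Hs. apply (is_derive_sqrt (fun s => energy N d x s + e * e)).
  - rewrite <- Rplus_0_r. apply (is_derive_plus (energy N d x) (fun _ => e * e));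
      [eapply position_energy_derive; eauto | apply (is_derive_const (e * e))].
  - generalize (energy_nonneg N d x s); nra.
Qed.

Lemma reg_position_rate_le e s : 0 < e ->
  2 * cross N d x v s / (2 * reg_sqrt_energy x e s) <= sqrt (energy N d v s).
Proof.
  intros He. apply div_sqrt_add_sq_le; auto using energy_nonneg, sqrt_pos, cross_le.
Qed.

Lemma reg_velocity_derive n e s : 0 < e -> ts n < s < ts (S n) ->
  is_derive (reg_sqrt_energy v e) s
    (-2 * (INR N / (INR N - 1)) * alpha ts s * dissipation N d psi x v s /
     (2 * reg_sqrt_energy v e s)).
Proof.
  intros He Hs. apply (is_derive_sqrt (fun s => energy N d v s + e * e)).
  - rewrite <- Rplus_0_r. apply (is_derive_plus (energy N d v) (fun _ => e * e));
      [eapply velocity_energy_derive; eauto | apply (is_derive_const (e * e))].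
  - generalize (energy_nonneg N d v s); nra.
Qed.

Lemma position_spread_growth n B t :
  (forall s, ts n < s < ts (S n) -> sqrt (energy N d v s) <= B) -> ts n <= t <= ts (S n) ->
  sqrt (energy N d x t) <= sqrt (energy N d x (ts n)) + B * (t - ts n).
Proof.
  intros HB Ht. apply (le_of_le_add_eps _ _ 1); [lra |]. intros e He.
  assert (Hmono : reg_sqrt_energy x e t - B * t <= reg_sqrt_energy x e (ts n) - B * ts n).
  { apply (antitone_of_derive_nonpos (fun s => reg_sqrt_energy x e s - B * s)
             (fun s => 2 * cross N d x v s / (2 * reg_sqrt_energy x e s) - B * 1) _ (ts (S n)));
      [apply ts_nonneg | exact Ht | | |].
    - apply cont_nonneg_minus;
        [apply cont_nonneg_reg_sqrt_energy, cont_nonneg_position_energy |].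
      apply cont_nonneg_of_ex_derive; intros; auto_derive; exact I.
    - intros s Hs. apply (is_derive_minus (reg_sqrt_energy x e) (fun s => B * s));
        [eapply reg_position_derive; eauto | auto_derive; [exact I | ring]].
    - intros s Hs. generalize (reg_position_rate_le e s He) (HB s Hs); lra. }
  destruct (reg_sqrt_energy_bounds x e t), (reg_sqrt_energy_bounds x e (ts n)); lra.
Qed.

Definition lyapunov (t : R) : R := sqrt (energy N d v t) + Psi psi (sqrt (energy N d x t)).

Definition reg_lyapunov (e t : R) : R := reg_sqrt_energy v e t + Psi psi (reg_sqrt_energy x e t).

Lemma lyapunov_nonneg t : 0 <= lyapunov t.
Proof.
  unfold lyapunov. generalize (sqrt_pos (energy N d v t)).
  generalize (Psi_nonneg psi K psi_cont psi_pos psi_le _ (sqrt_pos (energy N d x t))). lra.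
Qed.

Lemma reg_lyapunov_bounds e t : 0 <= e ->
  lyapunov t <= reg_lyapunov e t <= lyapunov t + e * (1 + K).
Proof.
  intros He. unfold lyapunov, reg_lyapunov.
  destruct (reg_sqrt_energy_bounds v e t He) as [Hv1 Hv2].
  destruct (reg_sqrt_energy_bounds x e t He) as [Hx1 Hx2].
  generalize (Psi_increment psi K psi_cont psi_pos psi_le _ _ Hx1) K_pos. intros. nra.
Qed.

Lemma cont_nonneg_reg_lyapunov e : cont_nonneg (reg_lyapunov e).
Proof.
  apply cont_nonneg_plus;
    [| apply (cont_nonneg_comp (Psi psi)); [apply Psi_continuous, psi_cont |]];
    apply cont_nonneg_reg_sqrt_energy;
    auto using cont_nonneg_velocity_energy, cont_nonneg_position_energy.
Qed.

Definition reg_lyapunov_rate (e s : R) : R :=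
  -2 * (INR N / (INR N - 1)) * alpha ts s * dissipation N d psi x v s /
    (2 * reg_sqrt_energy v e s) +
  2 * cross N d x v s / (2 * reg_sqrt_energy x e s) * psi_min_abs psi (reg_sqrt_energy x e s).

Lemma reg_lyapunov_derive n e s : 0 < e -> ts n < s < ts (S n) ->
  is_derive (reg_lyapunov e) s (reg_lyapunov_rate e s).
Proof.
  intros He Hs.
  apply (is_derive_plus (reg_sqrt_energy v e) (fun s => Psi psi (reg_sqrt_energy x e s)));
    [eapply reg_velocity_derive; eauto |].
  apply (is_derive_comp (Psi psi) (reg_sqrt_energy x e));
    [apply Psi_derive, psi_cont | eapply reg_position_derive; eauto].
Qed.

Lemma reg_lyapunov_rate_le_pos_phase p e s : 0 < e -> ts (2 * p) < s < ts (2 * p + 1) ->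
  reg_lyapunov_rate e s <= K * e.
Proof.
  intros He Hs. unfold reg_lyapunov_rate. rewrite (alpha_pos_phase ts ts_incr p s Hs).
  set (Xe := reg_sqrt_energy x e s).
  assert (HXe : 0 < Xe) by now apply reg_sqrt_energy_pos.
  set (g := psi_min_abs psi Xe).
  assert (Hg : 0 < g <= K).
  { unfold g, psi_min_abs. rewrite Rabs_right by lra.
    split; [apply psi_min_pos | apply psi_min_le_K]; auto; lra. }
  (* every pairwise distance is at most Xe, so each weight is at least g *)
  assert (Hdiss : g * energy N d v s <= dissipation N d psi x v s).
  { apply dissipation_ge. intros i j Hi Hj. unfold g, psi_min_abs.
    rewrite Rabs_right by lra. apply psi_min_le; auto. split; [apply sqrt_pos |].
    eapply Rle_trans; [apply edist_le_sqrt_energy; eauto | apply reg_sqrt_energy_bounds; lra]. }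
  eapply Rle_trans; [apply dissipative_rate_le with (E := energy N d v s) (e := e) |].
  - apply energy_nonneg.
  - lra.
  - now apply reg_sqrt_energy_pos.
  - apply reg_sqrt_energy_bounds; lra.
  - generalize coupling_ratio (dissipation_nonneg s); intros. nra.
  - now apply reg_position_rate_le.
  - apply Rmult_le_compat_r; lra.
Qed.

Lemma lyapunov_pos_phase p t : ts (2 * p) <= t <= ts (2 * p + 1) ->
  lyapunov t <= lyapunov (ts (2 * p)).
Proof.
  intros Ht. set (a := ts (2 * p)) in *.
  apply (le_of_le_add_eps _ _ (1 + K + K * (t - a))); [generalize K_pos; nra |]. intros e He.
  assert (Hmono : reg_lyapunov e t - K * e * t <= reg_lyapunov e a - K * e * a).
  { rewrite <- S_double in Ht.
    apply (antitone_of_derive_nonpos (fun s => reg_lyapunov e s - K * e * s)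
             (fun s => reg_lyapunov_rate e s - K * e * 1) _ (ts (S (2 * p))));
      [apply ts_nonneg | exact Ht | | |].
    - apply cont_nonneg_minus; [apply cont_nonneg_reg_lyapunov |].
      apply cont_nonneg_of_ex_derive; intros; auto_derive; exact I.
    - intros s Hs. apply (is_derive_minus (reg_lyapunov e) (fun s => K * e * s));
        [eapply reg_lyapunov_derive; eauto |].
      auto_derive; [exact I | ring].
    - intros s Hs. rewrite S_double in Hs.
      generalize (reg_lyapunov_rate_le_pos_phase p e s He Hs); lra. }
  destruct (reg_lyapunov_bounds e t) as [Hlt _]; [lra |].
  destruct (reg_lyapunov_bounds e a) as [_ Hla]; [lra |].
  lra.
Qed.

Lemma neg_phase_exp_le p s : ts (2 * p + 1) <= s <= ts (2 * p + 2) ->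
  exp (2 * K * (s - ts (2 * p + 1))) <= 4.
Proof.
  intros Hs. replace 4 with (exp (2 * ln 2))
    by (replace (2 * ln 2) with (ln 2 + ln 2) by ring; rewrite exp_plus, exp_ln; lra).
  left. apply exp_increasing. generalize (K_neg_length_lt p) K_pos. unfold neg_length. nra.
Qed.

Lemma velocity_spread_neg_phase p t : ts (2 * p + 1) <= t <= ts (2 * p + 2) ->
  sqrt (energy N d v t) <=
  sqrt (energy N d v (ts (2 * p + 1))) * exp (2 * K * (t - ts (2 * p + 1))).
Proof. intros Ht. apply velocity_spread_growth. now rewrite S_double_succ. Qed.

Lemma velocity_spread_neg_phase_le p t : ts (2 * p + 1) <= t <= ts (2 * p + 2) ->
  sqrt (energy N d v t) <= 4 * sqrt (energy N d v (ts (2 * p + 1))).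
Proof.
  intros Ht. eapply Rle_trans; [now apply velocity_spread_neg_phase |]. rewrite Rmult_comm.
  apply Rmult_le_compat_r; [apply sqrt_pos | now apply neg_phase_exp_le].
Qed.

Lemma velocity_spread_neg_phase_affine p t : ts (2 * p + 1) <= t <= ts (2 * p + 2) ->
  sqrt (energy N d v t) <=
  sqrt (energy N d v (ts (2 * p + 1))) * (1 + 8 * (K * (t - ts (2 * p + 1)))).
Proof.
  intros Ht. eapply Rle_trans; [now apply velocity_spread_neg_phase |].
  apply Rmult_le_compat_l; [apply sqrt_pos |].
  assert (Hy : 0 <= 2 * K * (t - ts (2 * p + 1))) by (generalize K_pos; nra).
  generalize (exp_le_affine _ Hy) (neg_phase_exp_le p t Ht). nra.
Qed.

Lemma position_spread_neg_phase p t : ts (2 * p + 1) <= t <= ts (2 * p + 2) ->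
  sqrt (energy N d x t) <=
  sqrt (energy N d x (ts (2 * p + 1))) +
  4 * sqrt (energy N d v (ts (2 * p + 1))) * (t - ts (2 * p + 1)).
Proof.
  intros Ht. apply position_spread_growth; [| now rewrite S_double_succ].
  intros s Hs. rewrite S_double_succ in Hs. apply velocity_spread_neg_phase_le. lra.
Qed.

Lemma lyapunov_neg_phase p t : ts (2 * p + 1) <= t <= ts (2 * p + 2) ->
  lyapunov t <= lyapunov (ts (2 * p + 1)) * exp (12 * (K * neg_length ts p)).
Proof.
  intros Ht.
  generalize (velocity_spread_neg_phase_affine p t Ht) (position_spread_neg_phase p t Ht).
  assert (Hy : 0 <= K * (t - ts (2 * p + 1)) <= K * neg_length ts p)
    by (unfold neg_length; generalize K_pos; split; nra).
  unfold lyapunov. set (a := ts (2 * p + 1)) in *.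
  set (Xa := sqrt (energy N d x a)). set (Va := sqrt (energy N d v a)). intros Hv Hx.
  assert (HVa : 0 <= Va) by apply sqrt_pos.
  assert (HPsi : Psi psi (sqrt (energy N d x t)) <= Psi psi Xa + 4 * Va * (K * (t - a))).
  { eapply Rle_trans; [apply (Psi_le_mono psi K psi_cont psi_pos psi_le), Hx |].
    destruct (Psi_increment psi K psi_cont psi_pos psi_le Xa (Xa + 4 * Va * (t - a)))
      as [_ Hinc]; nra. }
  generalize (Psi_nonneg psi K psi_cont psi_pos psi_le Xa (sqrt_pos _)).
  generalize (exp_ineq1_le (12 * (K * neg_length ts p))).
  set (y := K * (t - a)) in *. set (Y := K * neg_length ts p) in *. intros. nra.
Qed.

Lemma lyapunov_period p t : ts (2 * p) <= t <= ts (2 * p + 2) ->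
  lyapunov t <= lyapunov (ts (2 * p)) * exp (12 * (K * neg_length ts p)).
Proof.
  intros Ht.
  assert (Hexp : 1 <= exp (12 * (K * neg_length ts p))).
  { rewrite <- exp_0. apply exp_le_mono. unfold neg_length.
    assert (ts (2 * p + 1) <= ts (2 * p + 2)) by (apply ts_le; [exact ts_incr | lia]).
    generalize K_pos; nra. }
  assert (Hpos : lyapunov (ts (2 * p + 1)) <= lyapunov (ts (2 * p))).
  { apply lyapunov_pos_phase. split; [apply ts_le; [exact ts_incr | lia] | lra]. }
  generalize (lyapunov_nonneg (ts (2 * p))) (lyapunov_nonneg (ts (2 * p + 1))); intros.
  destruct (Rle_or_lt t (ts (2 * p + 1))) as [Hle | Hlt].
  - generalize (lyapunov_pos_phase p t (conj (proj1 Ht) Hle)). nra.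
  - generalize (lyapunov_neg_phase p t (conj (Rlt_le _ _ Hlt) (proj2 Ht))).
    generalize (exp_pos (12 * (K * neg_length ts p))). nra.
Qed.

Lemma lyapunov_bound p t : ts (2 * p) <= t <= ts (2 * p + 2) ->
  lyapunov t <= lyapunov (ts O) * exp (12 * rsum (S p) (fun q => K * neg_length ts q)).
Proof.
  intros Ht.
  assert (Heven : lyapunov (ts (2 * p)) <=
                  lyapunov (ts (2 * 0)) * exp (rsum p (fun q => 12 * (K * neg_length ts q)))).
  { apply (le_exp_rsum_of_step (fun n => lyapunov (ts (2 * n)))); [intros; apply lyapunov_nonneg |].
    intros n. replace (2 * S n)%nat with (2 * n + 2)%nat by lia.
    apply lyapunov_period. split; [apply ts_le; [exact ts_incr | lia] | lra]. }
  rewrite <- rsum_scal. simpl rsum. rewrite exp_plus, <- Rmult_assoc.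
  eapply Rle_trans; [now apply lyapunov_period |].
  apply Rmult_le_compat_r; [left; apply exp_pos | exact Heven].
Qed.

Lemma neg_length_sum_bounded : exists B, forall n, rsum n (fun p => K * neg_length ts p) <= B.
Proof.
  assert (Hterm : forall p, 0 <= K * neg_length ts p <=
                    ln (exp (K * neg_length ts p) / (2 - exp (K * neg_length ts p)))).
  { intros p. assert (0 <= K * neg_length ts p).
    { unfold neg_length.
      generalize K_pos (ts_lt ts ts_incr (2 * p + 1) (2 * p + 2) ltac:(lia)). nra. }
    split; [assumption |]. apply le_ln_exp_ratio; [assumption |].
    rewrite <- (exp_ln 2) by lra. apply exp_increasing, K_neg_length_lt. }
  eexists. intros n. eapply Rle_trans; [apply rsum_le; intros p _; apply Hterm |].
  apply rsum_le_Series; [exact neg_phase_series |]. intros p; generalize (Hterm p); lra.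
Qed.

Lemma position_spread_bounded : exists M, forall t, 0 <= t -> sqrt (energy N d x t) <= M.
Proof.
  destruct neg_length_sum_bounded as [B HB]. set (Lmax := lyapunov (ts O) * exp (12 * B)).
  assert (HL : forall t, 0 <= t -> Psi psi (sqrt (energy N d x t)) <= Lmax).
  { intros t Ht. destruct (ts_period_cover ts ts_incr t ts_lim) as [p Hp]; [now rewrite ts_0 |].
    assert (Psi psi (sqrt (energy N d x t)) <= lyapunov t)
      by (unfold lyapunov; generalize (sqrt_pos (energy N d v t)); lra).
    eapply Rle_trans; [| eapply Rle_trans; [apply lyapunov_bound, Hp |]]; [lra |].
    apply Rmult_le_compat_l; [apply lyapunov_nonneg |].
    apply exp_le_mono. specialize (HB (S p)). lra. }
  destruct (proj2 (is_lim_spec _ _ _) psi_min_not_integrable Lmax) as [M HM].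
  exists M. intros t Ht. apply Rnot_lt_le; intros Hlt.
  specialize (HM _ Hlt). rewrite RInt_psi_min in HM by apply sqrt_pos.
  specialize (HL t Ht). lra.
Qed.

Section Decay.

Variable m : R.
Hypothesis m_pos : 0 < m.
Hypothesis psi_ge_m : forall s, 0 <= s ->
  forall i j, (i < N)%nat -> (j < N)%nat -> m <= psi (edist d (x i) (x j) s).
Hypothesis pos_phase_long : forall p, ts (2 * p + 1) - ts (2 * p) > 1 / K.

Lemma velocity_spread_pos_phase_bound p t : ts (2 * p) <= t <= ts (2 * p + 1) ->
  sqrt (energy N d v t) <= sqrt (energy N d v (ts (2 * p))) * exp (- m * (t - ts (2 * p))).
Proof.
  apply velocity_spread_pos_phase. intros s Hs. apply psi_ge_m. generalize (ts_nonneg (2 * p)); lra.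
Qed.

Lemma velocity_spread_step p :
  sqrt (energy N d v (ts (2 * S p))) <=
  sqrt (energy N d v (ts (2 * p))) * exp (- m / K + 2 * (K * neg_length ts p)).
Proof.
  assert (Hab : ts (2 * p) <= ts (2 * p + 1) <= ts (2 * p + 2))
    by (split; apply ts_le; [exact ts_incr | lia | exact ts_incr | lia]).
  assert (H1 := velocity_spread_pos_phase_bound p (ts (2 * p + 1)) (conj (proj1 Hab) (Rle_refl _))).
  assert (H2 := velocity_spread_growth (2 * p + 1) (ts (2 * p + 2))).
  rewrite S_double_succ in H2. specialize (H2 (conj (proj2 Hab) (Rle_refl _))).
  assert (Hq : exp (- m * (ts (2 * p + 1) - ts (2 * p))) <= exp (- m / K)).
  { apply exp_le_mono. unfold Rdiv. apply Rmult_le_compat_neg_l; [lra |].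
    generalize (pos_phase_long p); unfold Rdiv; lra. }
  replace (2 * S p)%nat with (2 * p + 2)%nat by lia.
  rewrite exp_plus, <- Rmult_assoc. unfold neg_length.
  replace (2 * (K * (ts (2 * p + 2) - ts (2 * p + 1))))
    with (2 * K * (ts (2 * p + 2) - ts (2 * p + 1))) by ring.
  eapply Rle_trans; [exact H2 |]. apply Rmult_le_compat_r; [left; apply exp_pos |].
  eapply Rle_trans; [exact H1 |]. apply Rmult_le_compat_l; [apply sqrt_pos | exact Hq].
Qed.

Lemma velocity_spread_period p t : ts (2 * p) <= t <= ts (2 * p + 2) ->
  sqrt (energy N d v t) <= 4 * sqrt (energy N d v (ts (2 * p))).
Proof.
  intros Ht.
  assert (Hpos : forall s, ts (2 * p) <= s <= ts (2 * p + 1) ->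
                   sqrt (energy N d v s) <= sqrt (energy N d v (ts (2 * p)))).
  { intros s Hs. eapply Rle_trans; [now apply velocity_spread_pos_phase_bound |].
    rewrite <- (Rmult_1_r (sqrt _)) at 2. apply Rmult_le_compat_l; [apply sqrt_pos |].
    rewrite <- exp_0. apply exp_le_mono. nra. }
  generalize (sqrt_pos (energy N d v (ts (2 * p)))); intros HV0.
  destruct (Rle_or_lt t (ts (2 * p + 1))) as [Hle | Hlt].
  - generalize (Hpos t (conj (proj1 Ht) Hle)); lra.
  - generalize (velocity_spread_neg_phase_le p t (conj (Rlt_le _ _ Hlt) (proj2 Ht)))
      (Hpos (ts (2 * p + 1)) (conj (ts_le ts ts_incr (2 * p) (2 * p + 1) ltac:(lia)) (Rle_refl _))).
    lra.
Qed.

Lemma velocity_spread_bound p t : ts (2 * p) <= t <= ts (2 * p + 2) ->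
  sqrt (energy N d v t) <=
  4 * sqrt (energy N d v (ts O)) * exp (rsum p (fun q => - m / K + 2 * (K * neg_length ts q))).
Proof.
  intros Ht. eapply Rle_trans; [now apply velocity_spread_period |]. rewrite Rmult_assoc.
  apply Rmult_le_compat_l; [lra |].
  apply (le_exp_rsum_of_step (fun n => sqrt (energy N d v (ts (2 * n)))));
    [intros; apply sqrt_pos |].
  apply velocity_spread_step.
Qed.

Lemma velocity_decay : is_lim (dX N d v) p_infty 0.
Proof.
  destruct neg_length_sum_bounded as [B HB].
  apply (is_lim_0_of_geometric_tail _ (fun n => ts (2 * n))
           (4 * sqrt (energy N d v (ts O)) * exp (2 * B)) (exp (- m / K))).
  - split; [left; apply exp_pos | rewrite <- exp_0; apply exp_increasing].
    generalize (Rdiv_lt_0_compat m K m_pos K_pos); unfold Rdiv; lra.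
  - intros; apply rmax_nonneg.
  - intros n t Ht. destruct (ts_period_cover ts ts_incr t ts_lim) as [p Hp];
      [generalize (ts_nonneg (2 * n)); rewrite ts_0; lra |].
    assert (Hnp : (n <= p)%nat).
    { destruct (le_lt_dec n p) as [| Hlt]; [assumption | exfalso].
      assert (ts (2 * p + 2) <= ts (2 * n)) by (apply ts_le; [exact ts_incr | lia]). lra. }
    eapply Rle_trans; [apply dX_le_sqrt_energy |].
    eapply Rle_trans; [now apply velocity_spread_bound |].
    rewrite <- exp_mult_INR, rsum_plus, rsum_const, rsum_scal.
    replace (4 * sqrt (energy N d v (ts O)) * exp (2 * B) * exp (INR n * (- m / K)))
      with (4 * sqrt (energy N d v (ts O)) * exp (INR n * (- m / K) + 2 * B))
      by (rewrite exp_plus; ring).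
    apply Rmult_le_compat_l; [generalize (sqrt_pos (energy N d v (ts O))); lra |].
    apply exp_le_mono. specialize (HB p). apply le_INR in Hnp.
    assert (0 < m / K) by (apply Rdiv_lt_0_compat; [exact m_pos | apply K_pos]).
    replace (- m / K) with (- (m / K)) by (unfold Rdiv; ring). nra.
Qed.

End Decay.

End Flocking.

Theorem theorem6p1 (N d : nat) (psi : R -> R) (K : R) (ts : nat -> R)
  (HN : (2 <= N)%nat) (Hd : (1 <= d)%nat)
  (Hpos : forall r, 0 < psi r)
  (Hbdd : exists M, forall r, Rabs (psi r) <= M)
  (Hcont : forall r, continuous psi r)
  (HK : is_lub (fun y => exists r, y = Rabs (psi r)) K)
  (Hint : is_lim (fun X => RInt (psi_min psi) 0 X) p_infty p_infty)
  (Ht0 : ts O = 0)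
  (Hinc : forall n, ts n < ts (S n))
  (Hinf : is_lim_seq ts p_infty)
  (Hneg : forall n, ts (2 * n + 2)%nat - ts (2 * n + 1)%nat < ln 2 / K)
  (Hposg : forall n, ts (2 * n + 1)%nat - ts (2 * n)%nat > 1 / K)
  (Hser : ex_series (fun p =>
     ln (exp (K * (ts (2 * p + 2)%nat - ts (2 * p + 1)%nat)) /
         (2 - exp (K * (ts (2 * p + 2)%nat - ts (2 * p + 1)%nat))))))
  (x v : nat -> nat -> R -> R)
  (Hsol : is_solution N d psi ts x v) :
  (exists dstar, 0 < dstar /\ forall t, 0 <= t -> dX N d x t <= dstar) /\
  is_lim (fun t => dX N d v t) p_infty 0.
Proof.
  assert (psi_le : forall r, psi r <= K).
  { intros r. rewrite <- (Rabs_right (psi r)) by (left; apply Hpos).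
    apply (proj1 HK). now exists r. }
  destruct (position_spread_bounded N d psi K ts x v) as [M HM]; auto.
  set (D := Rmax M 1). assert (HD : M <= D /\ 1 <= D) by (split; [apply Rmax_l | apply Rmax_r]).
  split.
  - exists D. split; [lra |]. intros t Ht.
    eapply Rle_trans; [apply dX_le_sqrt_energy |]. generalize (HM t Ht); lra.
  - apply (velocity_decay N d psi K ts x v) with (m := psi_min psi D); auto.
    + apply psi_min_pos; auto; lra.
    + intros s Hs i j Hi Hj. apply psi_min_le; auto. split; [apply sqrt_pos |].
      eapply Rle_trans; [now apply (edist_le_sqrt_energy N) |]. generalize (HM s Hs); lra.
Qed.
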